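(* Let $\tau=(1+\sqrt5)/2$, $E=\mathbb{Q}(i,\sqrt5)$ with ring of integers $\mathcal{O}_E=\mathbb{Z}[i,\tau]$, and $\alpha=2+\sqrt5$. For each integer $n>0$ define integers $a_n,b_n$ by $a_n-b_n\sqrt5=(2-\sqrt5)^n$, and put $z_n=a_n+i\sqrt5\,b_n\in\mathcal{O}_E$. Let $$p_1(x)=x^2+i(1-\tau)x-1,\quad p_2(x)=x^2-i(1-\tau)x-1,\quad p_3(x)=x^2+i\tau x-1,\quad p_4(x)=x^2-i\tau x-1,$$ and for $j=1,2,3,4$ set $m_j(n)=\alpha^{-2n}p_j(\alpha^{2n})\in\mathcal{O}_E$. Then for every integer $n>0$, $z_n$ divides $z_{5n}$ in $\mathcal{O}_E$; more precisely, $$z_{5n}=z_n\,m_2(n)\,m_4(n)\quad\text{if } n \text{ is odd},\qquad z_{5n}=z_n\,m_1(n)\,m_3(n)\quad\text{if } n \text{ is even}.$$ *)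

(* E = Q(i, sqrt 5) is realised inside algC (algebraic complex numbers). *)
From HB Require Import structures.
From mathcomp Require Import all_boot all_order all_algebra all_field.
Set Implicit Arguments. Unset Strict Implicit. Unset Printing Implicit Defensive.
Import Order.TTheory GRing.Theory Num.Theory.
Local Open Scope ring_scope.

Definition sqrt5 : algC := sqrtC 5.
Definition tau : algC := (1 + sqrt5) / 2.
Definition alpha : algC := 2 + sqrt5.

(* O_E = Z[i, tau]; since i^2 = -1 and tau^2 = tau + 1, this ring is the
   Z-span of 1, i, tau, i*tau. *)
Definition inOE (x : algC) : Prop :=
  exists a b c d : int, x = a%:~R + b%:~R * 'i + c%:~R * tau + d%:~R * ('i * tau).

Definition dvdOE (x y : algC) : Prop := exists w, inOE w /\ y = x * w.

Definition p1 : {poly algC} := 'X^2 + ('i * (1 - tau))%:P * 'X - 1.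
Definition p2 : {poly algC} := 'X^2 - ('i * (1 - tau))%:P * 'X - 1.
Definition p3 : {poly algC} := 'X^2 + ('i * tau)%:P * 'X - 1.
Definition p4 : {poly algC} := 'X^2 - ('i * tau)%:P * 'X - 1.

Definition mpol (p : {poly algC}) (n : nat) : algC :=
  alpha ^- (2 * n) * p.[alpha ^+ (2 * n)].

Definition zof (a b : int) : algC := a%:~R + 'i * sqrt5 * b%:~R.

From mathcomp Require Import all_boot all_order all_algebra all_field.
From mathcomp Require Import ring zify.
Set Implicit Arguments. Unset Strict Implicit. Unset Printing Implicit Defensive.
Import Order.TTheory GRing.Theory Num.Theory.
Local Open Scope ring_scope.

(* With beta = 2 - sqrt5 = - alpha^-1, uniqueness of coordinates over Z[sqrt5] turns the
   hypothesis a_n - b_n sqrt5 = beta^n into a_n + b_n sqrt5 = alpha^n as well, so that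
   z_n = (1 - i)/2 (i alpha^n + beta^n).  Hence z_(5n) / z_n is the cofactor of a + b in
   a^5 + b^5 for a = i alpha^n and b = beta^n, which equals d^2 + (-1)^n i d + 1 with
   d = alpha^(2n) - alpha^(-2n).  As tau (1 - tau) = -1, this quadratic in d splits as
   m_1 m_3 or m_2 m_4, and each m_j is d plus an element of i Z[tau], with d in Z[tau]. *)

Lemma addrX5 (R : comPzRingType) (a b : R) :
  a ^+ 5 + b ^+ 5 =
  (a + b) * ((a ^+ 2 + b ^+ 2) ^+ 2 - a * b * (a ^+ 2 + b ^+ 2) - (a * b) ^+ 2).
Proof. by ring. Qed.

Lemma conj_quadratic_exp (R : comPzRingType) (d u v : int) (r : R) n :
  r ^+ 2 = d%:~R ->
  exists a b : int, (u%:~R + v%:~R * r) ^+ n = a%:~R + b%:~R * r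
                 /\ (u%:~R - v%:~R * r) ^+ n = a%:~R - b%:~R * r.
Proof.
move=> r2; elim: n => [|n [a [b [IHp IHm]]]].
  by exists 1, 0; rewrite !expr0 mul0r addr0 subr0.
exists (a * u + b * v * d), (a * v + b * u).
by rewrite !exprSr IHp IHm !(intrD, intrM) -r2; split; ring.
Qed.

Lemma sqr_eq_prime_mul_sqr (p : nat) (x y : int) :
  prime p -> x ^+ 2 = p%:Z * y ^+ 2 -> y = 0.
Proof.
move=> pr_p /(congr1 absz); rewrite abszM !abszX /= => exy.
apply/eqP; rewrite -absz_eq0; apply/negPn/negP; rewrite -lt0n => y_gt0.
have p_gt0 := prime_gt0 pr_p.
have x_gt0 : (0 < `|x|)%N by nia.
have := congr1 (logn p) exy.
rewrite lognM ?expn_gt0 ?y_gt0 // !lognX (logn_prime _ pr_p) eqxx.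
lia.
Qed.

Lemma sqrtC_prime_irrational (p : nat) (x y : int) :
  prime p -> x%:~R = y%:~R * sqrtC p%:R :> algC -> y = 0.
Proof.
move=> pr_p exy; apply: (sqr_eq_prime_mul_sqr pr_p).
have : (x ^+ 2)%:~R = (p%:Z * y ^+ 2)%:~R :> algC.
  by rewrite intrM !rmorphXn /= exy exprMn sqrtCK mulrC.
exact: intr_inj.
Qed.

Lemma sub_sqrtC_prime_inj (p : nat) (a b c d : int) : prime p ->
  a%:~R - b%:~R * sqrtC p%:R = c%:~R - d%:~R * sqrtC p%:R :> algC -> a = c /\ b = d.
Proof.
move=> pr_p e.
have e' : (a - c)%:~R = (b - d)%:~R * sqrtC p%:R :> algC.
  by rewrite !intrB mulrBl (canRL (subrK _) e); ring.
have /eqP := sqrtC_prime_irrational pr_p e'; rewrite subr_eq0 => /eqP bd.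
by move: e'; rewrite bd subrr mul0r => /eqP; rewrite intr_eq0 subr_eq0 => /eqP.
Qed.

Lemma mul_addr_sqrCi (y u v : algC) : u * v = -1 ->
  (y + 'i * u) * (y + 'i * v) = y ^+ 2 + (u + v) * 'i * y + 1.
Proof.
move=> uv; transitivity (y ^+ 2 + (u + v) * 'i * y + 'i ^+ 2 * (u * v)); first by ring.
by rewrite sqrCi uv; ring.
Qed.

Lemma sqrt5_sqr : sqrt5 ^+ 2 = 5.
Proof. exact: sqrtCK. Qed.

Definition beta : algC := 2 - sqrt5.

Lemma alpha_mul_beta : alpha * beta = -1.
Proof.
rewrite /alpha /beta; transitivity (4 - sqrt5 ^+ 2); first by ring.
by rewrite sqrt5_sqr; ring.
Qed.

Lemma alpha_neq0 : alpha != 0.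
Proof.
by apply: contra_eq_neq alpha_mul_beta => ->; rewrite mul0r eq_sym oppr_eq0 oner_eq0.
Qed.

Lemma invr_alpha : alpha^-1 = - beta.
Proof.
by apply: (mulfI alpha_neq0); rewrite mulfV ?alpha_neq0 // mulrN alpha_mul_beta opprK.
Qed.

Lemma tau_sqr : tau ^+ 2 = tau + 1.
Proof.
rewrite /tau; transitivity ((6 + 2 * sqrt5 + (sqrt5 ^+ 2 - 5)) / 4); first by field.
by rewrite sqrt5_sqr; field.
Qed.

Lemma mul1Btau : (1 - tau) * tau = -1.
Proof. by rewrite mulrBl mul1r -expr2 tau_sqr; ring. Qed.

Lemma conj_alpha_exp (a b : int) n :
  a%:~R - b%:~R * sqrt5 = beta ^+ n -> a%:~R + b%:~R * sqrt5 = alpha ^+ n.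
Proof.
have [a' [b' []]] := conj_quadratic_exp (d := 5) 2 1 n sqrt5_sqr.
rewrite mul1r -/alpha -/beta => -> -> e.
have pr5 : prime 5 by [].
by have [-> ->] := sub_sqrtC_prime_inj pr5 e.
Qed.

Lemma zof_expE (a b : int) n : a%:~R - b%:~R * sqrt5 = beta ^+ n ->
  zof a b = (1 - 'i) / 2 * ('i * alpha ^+ n + beta ^+ n).
Proof.
move=> e; rewrite -e -(conj_alpha_exp e) /zof mulrDr mulrA.
have i_mul : (1 - 'i) * 'i = 1 + 'i :> algC.
  by rewrite mulrBl mul1r -expr2 sqrCi opprK addrC.
by rewrite [(1 - 'i) / 2 * 'i]mulrAC i_mul; field.
Qed.

Definition delta (n : nat) : algC := alpha ^+ (2 * n) - beta ^+ (2 * n).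

Lemma zof_exp5E (a b c d : int) n :
  a%:~R - b%:~R * sqrt5 = beta ^+ n -> c%:~R - d%:~R * sqrt5 = beta ^+ (5 * n) ->
  zof c d = zof a b * (delta n ^+ 2 + (-1) ^+ n * 'i * delta n + 1).
Proof.
move=> ezn ez5n; rewrite (zof_expE ezn) (zof_expE ez5n) -[RHS]mulrA; congr (_ * _).
have i5 : 'i * alpha ^+ (5 * n) = ('i * alpha ^+ n) ^+ 5.
  have i4 : 'i ^+ 4 = 1 :> algC by rewrite (exprM _ 2 2) sqrCi sqrrN expr1n.
  by rewrite exprMn exprS i4 mulr1 -exprM mulnC.
have sq : ('i * alpha ^+ n) ^+ 2 + (beta ^+ n) ^+ 2 = - delta n.
  by rewrite exprMn sqrCi mulN1r /delta -!exprM mulnC opprB addrC.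
have pr : 'i * alpha ^+ n * beta ^+ n = 'i * (-1) ^+ n.
  by rewrite -mulrA -exprMn alpha_mul_beta.
have sign2 : ((-1) ^+ n) ^+ 2 = 1 :> algC by rewrite exprAC sqrrN !expr1n.
rewrite i5 (mulnC 5) exprM addrX5 sq pr; congr (_ * _).
by rewrite exprMn sqrCi sign2; ring.
Qed.

Lemma mpol_quadE (c : algC) n : mpol ('X^2 + c%:P * 'X - 1) n = delta n + c.
Proof.
have inv : alpha ^- (2 * n) = beta ^+ (2 * n) by rewrite -exprVn invr_alpha !exprM sqrrN.
rewrite /mpol !hornerE /delta -inv; field.
by rewrite expf_neq0 // alpha_neq0.
Qed.

Lemma mpolE n :
  [/\ mpol p1 n = delta n + 'i * (1 - tau), mpol p2 n = delta n + 'i * (tau - 1),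
      mpol p3 n = delta n + 'i * tau & mpol p4 n = delta n + 'i * (- tau)].
Proof.
have subE (c : algC) : 'X^2 - c%:P * 'X - 1 = 'X^2 + (- c)%:P * 'X - 1.
  by rewrite polyCN mulNr.
rewrite /p1 /p2 /p3 /p4 !subE !mpol_quadE.
by split; ring.
Qed.

Lemma mpol_p13 n : mpol p1 n * mpol p3 n = delta n ^+ 2 + 'i * delta n + 1.
Proof. by have [-> _ -> _] := mpolE n; rewrite mul_addr_sqrCi; [ring | exact: mul1Btau]. Qed.

Lemma mpol_p24 n : mpol p2 n * mpol p4 n = delta n ^+ 2 - 'i * delta n + 1.
Proof.
have [_ -> _ ->] := mpolE n.
by rewrite mul_addr_sqrCi; [ring | rewrite mulrN -mulNr opprB mul1Btau].
Qed.

Definition inZtau (x : algC) : Prop := exists a c : int, x = a%:~R + c%:~R * tau.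

Lemma inZtau_int (a : int) : inZtau a%:~R.
Proof. by exists a, 0; rewrite mul0r addr0. Qed.

Lemma inZtau_tau : inZtau tau.
Proof. by exists 0, 1; rewrite mul1r add0r. Qed.

Lemma inZtauD x y : inZtau x -> inZtau y -> inZtau (x + y).
Proof.
move=> [a [c ->]] [a' [c' ->]]; exists (a + a'), (c + c').
by rewrite !intrD; ring.
Qed.

Lemma inZtauN x : inZtau x -> inZtau (- x).
Proof. by move=> [a [c ->]]; exists (- a), (- c); rewrite !intrN; ring. Qed.

Lemma inZtauM x y : inZtau x -> inZtau y -> inZtau (x * y).
Proof.
move=> [a [c ->]] [a' [c' ->]]; exists (a * a' + c * c'), (a * c' + c * a' + c * c').
transitivity ((a * a')%:~R + (a * c' + c * a')%:~R * tau + (c * c')%:~R * tau ^+ 2).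
  by rewrite !(intrD, intrM); ring.
by rewrite tau_sqr !(intrD, intrM); ring.
Qed.

Lemma inZtauX x n : inZtau x -> inZtau (x ^+ n).
Proof.
move=> Zx; elim: n => [|n IHn]; first exact: (inZtau_int 1).
by rewrite exprS; apply: inZtauM.
Qed.

Lemma inZtau_delta n : inZtau (delta n).
Proof.
have Zalpha : inZtau alpha by exists 1, 2; rewrite /alpha /tau; field.
have Zbeta : inZtau beta by exists 3, (-2); rewrite /beta /tau; field.
by apply: inZtauD; [|apply: inZtauN]; apply: inZtauX.
Qed.

Lemma inOE_Ztau x : inOE x <-> exists u v, [/\ inZtau u, inZtau v & x = u + 'i * v].
Proof.
split.
  move=> [a [b [c [d ->]]]]; exists (a%:~R + c%:~R * tau), (b%:~R + d%:~R * tau).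
  by split; [exists a, c | exists b, d | ring].
move=> [_ [_ [[a [c ->]] [b [d ->]] ->]]]; exists a, b, c, d; ring.
Qed.

Lemma inOEM x y : inOE x -> inOE y -> inOE (x * y).
Proof.
move=> /inOE_Ztau [u [v [Zu Zv ->]]] /inOE_Ztau [u' [v' [Zu' Zv' ->]]].
apply/inOE_Ztau; exists (u * u' - v * v'), (u * v' + v * u').
split; [apply: inZtauD; last apply: inZtauN | apply: inZtauD |]; try exact: inZtauM.
transitivity (u * u' + 'i ^+ 2 * (v * v') + 'i * (u * v' + v * u')); first by ring.
by rewrite sqrCi; ring.
Qed.

Lemma inOE_mpol n :
  [/\ inOE (mpol p1 n), inOE (mpol p2 n), inOE (mpol p3 n) & inOE (mpol p4 n)].
Proof.
have mem v : inZtau v -> inOE (delta n + 'i * v).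
  by move=> Zv; apply/inOE_Ztau; exists (delta n), v; split=> //; exact: inZtau_delta.
have [-> -> -> ->] := mpolE n.
have Z1 := inZtau_int 1.
split; apply: mem.
- exact: inZtauD Z1 (inZtauN inZtau_tau).
- exact: inZtauD inZtau_tau (inZtauN Z1).
- exact: inZtau_tau.
- exact: inZtauN inZtau_tau.
Qed.

Theorem lemma3p1 (n : nat) (an bn a5n b5n : int) :
  (0 < n)%N ->
  an%:~R - bn%:~R * sqrt5 = (2 - sqrt5) ^+ n ->
  a5n%:~R - b5n%:~R * sqrt5 = (2 - sqrt5) ^+ (5 * n) ->
  [/\ inOE (mpol p1 n), inOE (mpol p2 n), inOE (mpol p3 n) & inOE (mpol p4 n)] /\
  [/\ dvdOE (zof an bn) (zof a5n b5n),
      (odd n -> zof a5n b5n = zof an bn * mpol p2 n * mpol p4 n) &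
      (~~ odd n -> zof a5n b5n = zof an bn * mpol p1 n * mpol p3 n)].
Proof.
move=> _ ezn ez5n; have z5nE := zof_exp5E ezn ez5n.
have [OE1 OE2 OE3 OE4] := inOE_mpol n.
have z5n_odd : odd n -> zof a5n b5n = zof an bn * mpol p2 n * mpol p4 n.
  by move=> odd_n; rewrite z5nE -[RHS]mulrA mpol_p24 -signr_odd odd_n expr1 mulN1r mulNr.
have z5n_even : ~~ odd n -> zof a5n b5n = zof an bn * mpol p1 n * mpol p3 n.
  by move=> /negbTE even_n; rewrite z5nE -[RHS]mulrA mpol_p13 -signr_odd even_n mul1r.
split=> //; split=> //.
have [/z5n_odd|/z5n_even] := boolP (odd n); rewrite -mulrA => ->.
  by exists (mpol p2 n * mpol p4 n); split=> //; exact: inOEM.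
by exists (mpol p1 n * mpol p3 n); split=> //; exact: inOEM.
Qed.
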